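(* Assume AM defends every real machine, i.e. $d_r=e_r$ for all $r\in\mathcal M$. For each $m\in\mathcal M$ let $\pi^{(m)}$ be the naive deterministic AM strategy that always creates a sandbox of type $m$ (i.e. $\pi^{(m)}_m=1$ and $\pi^{(m)}_{m'}=0$ for $m'\ne m$), and let $v(m)=1-\max_{\rho\in[0,1]^{\mathcal M}}u_M(\pi^{(m)},\rho)$, which equals $u_{AM}(\pi^{(m)},\rho)$ for every best response $\rho$ of M to $\pi^{(m)}$. If $m^*\in\arg\max_{m\in\mathcal M}e_m$ (the strategy called Majority), then $v(m^* )\ge v(m)$ for all $m\in\mathcal M$; that is, Majority is AM-optimal among naive deterministic AM strategies.
   Context: Let $\mathcal M$ be a finite nonempty set of machine (environment) types. Let $e\in[0,1]^{\mathcal M}$ with $\sum_{r\in\mathcal M}e_r=1$ ($e_r$ is the fraction of all real machines that are of type $r$), and $d\in[0,1]^{\mathcal M}$ with $0\le d_r\le e_r$ ($d_r$ is the fraction of all real machines that are of type $r$ and defended by the anti-malware AM); put $D=\sum_{r}d_r$. An AM strategy $\pi$ assigns to each real machine type $r\in\mathcal M$ a vector $\pi^r\in[0,1]^{\mathcal M}$ with $\sum_{m}\pi^r_m\le 1$ ($\pi^r_m$ is the probability that AM creates a sandbox of type $m$ on a defended real machine of type $r$; with probability $1-\sum_m\pi^r_m$ no sandbox is created). AM's strategy is naive if $\pi^r$ does not depend on $r$; then we write $\pi_m$ for $\pi^r_m$. A malware (M) strategy is a vector $\rho\in[0,1]^{\mathcal M}$ ($\rho_m$ is the probability M attacks when it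 perceives environment $m$). The utilities are $$u_M(\pi,\rho)=\sum_{r\in\mathcal M}\Big[(e_r-d_r)\rho_r+d_r\Big(1-\sum_{m\in\mathcal M}\pi^r_m\rho_m\Big)\rho_r\Big],$$ $$u_{AM}(\pi,\rho)=\sum_{r\in\mathcal M}d_r\Big[\sum_{m\in\mathcal M}\big(\pi^r_m\rho_m+\pi^r_m(1-\rho_m)(1-\rho_r)\big)+\Big(1-\sum_{m\in\mathcal M}\pi^r_m\Big)(1-\rho_r)\Big].$$ A best response of M to $\pi$ is any $\rho\in\arg\max_{\hat\rho\in[0,1]^{\mathcal M}}u_M(\pi,\hat\rho)$. A pair $(\pi,\rho)$ with $\rho$ a best response to $\pi$ is an equilibrium; it is AM-optimal within a class of AM strategies if $\pi$ lies in the class and $u_{AM}(\pi,\rho)\ge u_{AM}(\pi',\rho')$ for every equilibrium $(\pi',\rho')$ with $\pi'$ in the class. *)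

From HB Require Import structures.
From mathcomp Require Import all_boot all_order all_algebra.
Set Implicit Arguments. Unset Strict Implicit. Unset Printing Implicit Defensive.
Import Order.TTheory GRing.Theory Num.Theory.
Local Open Scope ring_scope.

(* Machine types form a finite type M.
   An AM strategy is pi : M -> M -> R with pi r m = pi^r_m.
   A malware strategy is rho : M -> R. *)

Definition am_strategy {R : realFieldType} {M : finType} (pi : M -> M -> R) :=
  forall r, (forall m, 0 <= pi r m <= 1) /\ \sum_(m : M) pi r m <= 1.

Definition m_strategy {R : realFieldType} {M : finType} (rho : M -> R) :=
  forall m, 0 <= rho m <= 1.

Definition uM {R : realFieldType} {M : finType} (e d : M -> R)
  (pi : M -> M -> R) (rho : M -> R) : R :=
  \sum_(r : M) ((e r - d r) * rho r
                + d r * (1 - \sum_(m : M) pi r m * rho m) * rho r).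

Definition uAM {R : realFieldType} {M : finType} (d : M -> R)
  (pi : M -> M -> R) (rho : M -> R) : R :=
  \sum_(r : M) d r *
    (\sum_(m : M) (pi r m * rho m + pi r m * (1 - rho m) * (1 - rho r))
     + (1 - \sum_(m : M) pi r m) * (1 - rho r)).

Definition best_response {R : realFieldType} {M : finType} (e d : M -> R)
  (pi : M -> M -> R) (rho : M -> R) :=
  m_strategy rho /\
  forall rho' : M -> R, m_strategy rho' -> uM e d pi rho' <= uM e d pi rho.

Definition det_strategy {R : realFieldType} {M : finType} (m0 : M) : M -> M -> R :=
  fun (_ : M) (m : M) => if m == m0 then 1 else 0.

(* Against a defender who always opens a sandbox of type m, the malware's
   payoff is (1 - rho_m) * sum_r e_r rho_r, so it should attack on every other
   environment and only tune its attack probability x on m, obtaining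
   (1 - x) * (1 - e_m (1 - x)).  This is decreasing in e_m, so the malware
   gains least, and AM gains most, when m is the most frequent machine type. *)

From mathcomp Require Import all_boot all_order all_algebra.
From mathcomp Require Import ring lra.
From Stdlib Require Import FunctionalExtensionality.
Import Order.TTheory GRing.Theory Num.Theory.
Local Open Scope ring_scope.

Section DeterministicSandbox.

Set Implicit Arguments.
Unset Strict Implicit.

Context {R : realFieldType} {M : finType}.
Implicit Types (e rho : M -> R) (m : M) (x E : R).

Definition switch_at m x : M -> R := fun r => if r == m then x else 1.

Definition switch_payoff E x : R := (1 - x) * (x * E + (1 - E)).

Definition best_switch E : R := if E <= 1/2 then 0 else 1 - 1 / (2 * E).

Lemma sum_det_strategy m r (F : M -> R) :
  \sum_i det_strategy m r i * F i = F m.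
Proof.
rewrite (bigD1 m) //= /det_strategy eqxx mul1r big1 ?addr0 // => i /negbTE ->.
by rewrite mul0r.
Qed.

Lemma uM_det e m rho :
  uM e e (det_strategy m) rho = (1 - rho m) * \sum_r e r * rho r.
Proof.
rewrite /uM mulr_sumr; apply: eq_bigr => r _.
rewrite sum_det_strategy subrr mul0r add0r; ring.
Qed.

Lemma uAM_det e m rho : \sum_r e r = 1 ->
  uAM e (det_strategy m) rho = 1 - uM e e (det_strategy m) rho.
Proof.
move=> e_sum1; rewrite uM_det /uAM.
transitivity (\sum_r (e r - (1 - rho m) * (e r * rho r))); last first.
  by rewrite sumrB e_sum1 mulr_sumr.
apply: eq_bigr => r _.
have sum_det1 : \sum_i det_strategy m r i = 1 :> R.
  by rewrite -[RHS](sum_det_strategy m r (fun _ => 1)); apply: eq_bigr => i _; rewrite mulr1.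
under eq_bigr do rewrite -mulrA -mulrDr.
rewrite sum_det_strategy sum_det1; ring.
Qed.

Lemma sum_switch_at e m x : \sum_r e r = 1 ->
  \sum_r e r * switch_at m x r = x * e m + (1 - e m).
Proof.
move=> e_sum1; rewrite -[in RHS]e_sum1 [in RHS](bigD1 m) //= addrAC subrr add0r.
rewrite (bigD1 m) //= /switch_at eqxx mulrC.
by congr (_ + _); apply: eq_bigr => r /negbTE ->; rewrite mulr1.
Qed.

Lemma sum_le_switch_at e m rho :
  (forall r, 0 <= e r) -> m_strategy rho ->
  \sum_r e r * rho r <= \sum_r e r * switch_at m (rho m) r.
Proof.
move=> e_ge0 rho01; apply: ler_sum => r _; rewrite /switch_at.
by case: eqP => [-> //|_]; rewrite mulr1 ler_piMr //; case/andP: (rho01 r).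
Qed.

Lemma m_strategy_switch_at m x : 0 <= x <= 1 -> m_strategy (switch_at m x).
Proof. by move=> x01 r; rewrite /switch_at; case: ifP; rewrite // ler01 lexx. Qed.

Lemma uM_switch_at e m x : \sum_r e r = 1 ->
  uM e e (det_strategy m) (switch_at m x) = switch_payoff (e m) x.
Proof. by move=> e_sum1; rewrite uM_det sum_switch_at // /switch_at eqxx. Qed.

Lemma uM_det_le_switch_payoff e m rho :
  (forall r, 0 <= e r) -> \sum_r e r = 1 -> m_strategy rho ->
  uM e e (det_strategy m) rho <= switch_payoff (e m) (rho m).
Proof.
move=> e_ge0 e_sum1 rho01; rewrite uM_det /switch_payoff -(sum_switch_at m (rho m) e_sum1).
apply: ler_wpM2l; last exact: sum_le_switch_at.
by case/andP: (rho01 m) => _; rewrite subr_ge0.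
Qed.

Lemma switch_payoff_antitone x E E' : 0 <= x <= 1 -> E <= E' ->
  switch_payoff E' x <= switch_payoff E x.
Proof.
move=> /andP[x_ge0 x_le1] leEE'; rewrite /switch_payoff.
apply: ler_wpM2l; first lra.
nra.
Qed.

Lemma best_switch_in01 E : 0 <= best_switch E <= 1.
Proof.
rewrite /best_switch; case: ifP => [_|]; first by rewrite lexx ler01.
move/negbT; rewrite -ltNge => ltE.
have E_gt0 : 0 < 2 * E by lra.
rewrite subr_ge0 gerBl divr_ge0 ?ler_pdivrMr //=; lra.
Qed.

Lemma switch_payoff_le_best E y : 0 <= E -> 0 <= y ->
  switch_payoff E y <= switch_payoff E (best_switch E).
Proof.
move=> E_ge0 y_ge0; rewrite /switch_payoff /best_switch.
case: ifP => [leE|]; first nra.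
move/negbT; rewrite -ltNge => ltE.
have E_neq0 : 2 * E != 0 by apply/negP => /eqP; lra.
(* the maximum of the concave quadratic is 1 / (4E), attained at 1 - 1/(2E) *)
have -> : (1 - (1 - 1 / (2 * E))) * ((1 - 1 / (2 * E)) * E + (1 - E)) = 1 / (4 * E).
  by field; lra.
rewrite ler_pdivlMr; last lra.
have square_gap : 4 * E * ((1 - y) * (y * E + (1 - E))) + (2 * E * y - 2 * E + 1) ^+ 2 = 1.
  by ring.
by rewrite mulrC -[X in _ <= X]square_gap lerDl sqr_ge0.
Qed.

Lemma best_response_switch e m :
  (forall r, 0 <= e r) -> \sum_r e r = 1 ->
  best_response e e (det_strategy m) (switch_at m (best_switch (e m))).
Proof.
move=> e_ge0 e_sum1; split; first exact/m_strategy_switch_at/best_switch_in01.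
move=> rho rho01; rewrite uM_switch_at //.
apply: le_trans (uM_det_le_switch_payoff m e_ge0 e_sum1 rho01) _.
by apply: switch_payoff_le_best => //; case/andP: (rho01 m).
Qed.

End DeterministicSandbox.

Theorem mainTheorem4 (R : realFieldType) (M : finType) (e d : M -> R)
  (he01 : forall r, 0 <= e r <= 1)
  (hesum : \sum_(r : M) e r = 1)
  (hde : forall r, d r = e r)
  (mstar : M) (hmaj : forall m, e m <= e mstar) :
  (exists rho, best_response e d (det_strategy mstar) rho) /\
  forall rho, best_response e d (det_strategy mstar) rho ->
  forall (m : M) (rho' : M -> R), best_response e d (det_strategy m) rho' ->
    uAM d (det_strategy m) rho' <= uAM d (det_strategy mstar) rho.
Proof.
have -> : d = e by apply: functional_extensionality.
have e_ge0 r : 0 <= e r by case/andP: (he01 r).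
split; first by eexists; exact: best_response_switch.
move=> rho [rho01 _] m rho' [_ rho'_best].
rewrite !uAM_det // lerD2l lerN2.
apply: le_trans (uM_det_le_switch_payoff mstar e_ge0 hesum rho01) _.
apply: le_trans (switch_payoff_antitone (rho01 mstar) (hmaj m)) _.
rewrite -uM_switch_at //; apply: rho'_best.
exact/m_strategy_switch_at/rho01.
Qed.
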